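(* Under the standing assumptions of the context, for each fixed $l\ge l_0$ and any real $a<b$, $$\sup_{\omega\in[a,b]}\Big|S_l(\omega)-\Big(\prod_{j=1}^{n}m_l(\omega2^{-j})\Big)'\Big|\longrightarrow0\quad(n\to\infty),$$ where $S_l(\omega):=\sum_{j_0=1}^{\infty}2^{-j_0}m_l'(\omega2^{-j_0})\prod_{j\ge1,\,j\ne j_0}m_l(\omega2^{-j})$.
   Context: Let $\theta$ be odd, non-decreasing, $C^2$, with $\theta(\omega)=\pi/4$ for $\omega>\pi/3$; fix $\pi/3\le\omega_0<\pi/2$. Meyer scaling function (Fourier transform): $\widehat{\varphi^M}(\omega)=1$ for $|\omega|\le2\omega_0$, $=\cos(\frac\pi4+\theta(\frac{\pi}{3(\pi-2\omega_0)}(|\omega|-\pi)))$ for $2\omega_0<|\omega|\le2\pi-2\omega_0$, $=0$ otherwise. Meyer mask: $2\pi$-periodic $m^M$ with $m^M(\omega)=\widehat{\varphi^M}(2\omega)$ on $[-\pi,\pi]$. $\|\cdot\|_C$: sup norm on $[-\pi,\pi]$. A linear method of summation $(\lambda_{n,k})$ maps $f$ with Fourier coefficients $a_k,b_k$ to $u_n(f,\omega)=\frac{a_0}2+\sum_{k=1}^n\lambda_{n,k}(a_k\cos k\omega+b_k\sin k\omega)$. $m^M_l:=m^M/(\cos\frac\omega2)^{2l}$. Standing assumptions: a method and a sequence $n(l)$ are fixed with $u_l:=u_{n(l)}(m^M_l,\cdot)$, $u_{1,l}:=u_{n(l)}((m^M_l)',\cdot)$ satisfying $\|u_l-m^M_l\|_C=o(l^{-1})$,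 $\|u_{1,l}-(m^M_l)'\|_C=o(1)$, $u_l(\pi)\ne0$; $l_0$ is fixed with $\inf_{l\ge l_0}|u_l(0)|>0$. $m_l(\omega):=(\cos\frac\omega2)^{2l}u_l(\omega)/u_l(0)$ (a trigonometric polynomial with $m_l(0)=1$). *)

From Stdlib Require Import Reals.
From Coquelicot Require Import Coquelicot.
Open Scope R_scope.

Definition theta_ok (theta : R -> R) : Prop :=
  (forall x, theta (- x) = - theta x) /\
  (forall x y, x <= y -> theta x <= theta y) /\
  (forall x, ex_derive theta x) /\
  (forall x, ex_derive (Derive theta) x) /\
  (forall x, continuous (Derive (Derive theta)) x) /\
  (forall x, PI / 3 < x -> theta x = PI / 4).

Definition phiM_hat (theta : R -> R) (w0 w : R) : R :=
  if Rle_dec (Rabs w) (2 * w0) then 1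
  else if Rle_dec (Rabs w) (2 * PI - 2 * w0) then
    cos (PI / 4 + theta (PI / (3 * (PI - 2 * w0)) * (Rabs w - PI)))
  else 0.

Definition red2pi (w : R) : R :=
  w - 2 * PI * IZR (Int_part ((w + PI) / (2 * PI))).

Definition mM (theta : R -> R) (w0 w : R) : R := phiM_hat theta w0 (2 * red2pi w).

Definition mMl (theta : R -> R) (w0 : R) (l : nat) (w : R) : R :=
  mM theta w0 w / (cos (w / 2)) ^ (2 * l).

Definition fa (f : R -> R) (k : nat) : R := / PI * RInt (fun x => f x * cos (INR k * x)) (- PI) PI.
Definition fb (f : R -> R) (k : nat) : R := / PI * RInt (fun x => f x * sin (INR k * x)) (- PI) PI.

Definition u_meth (lam : nat -> nat -> R) (n : nat) (f : R -> R) (w : R) : R :=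
  fa f 0 / 2 + sum_n_m (fun k => lam n k * (fa f k * cos (INR k * w) + fb f k * sin (INR k * w))) 1 n.

Fixpoint prodm (m : R -> R) (n : nat) (w : R) : R :=
  match n with
  | O => 1
  | S n' => prodm m n' w * m (w / 2 ^ n)
  end.

Fixpoint prodm_except (m : R -> R) (j0 : nat) (N : nat) (w : R) : R :=
  match N with
  | O => 1
  | S N' => prodm_except m j0 N' w * (if Nat.eqb N j0 then 1 else m (w / 2 ^ N))
  end.

Definition infprod_except (m : R -> R) (j0 : nat) (w : R) : R :=
  real (Lim_seq (fun N => prodm_except m j0 N w)).

Definition S_of (m : R -> R) (w : R) : R :=
  Series (fun k => let j0 := S k in
            / 2 ^ j0 * Derive m (w / 2 ^ j0) * infprod_except m j0 w).

From Stdlib Require Import Reals Lra Lia.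
From Coquelicot Require Import Coquelicot.
Open Scope R_scope.

(* Only [u_l(0) <> 0] is used from the standing assumptions: [m_l] is a
   trigonometric polynomial with [m_l(0) = 1], so it is derivable with
   [|m_l'| <= D], hence [|m_l(x) - 1| <= D |x|].  For [|w| <= K] the factors
   [m_l(w 2^-j)] are then within [D K 2^-j] of 1, so all partial products
   (with or without the [j0]-th factor) are bounded by [exp (D K)] and converge
   at rate [2^-N].  By the product rule the derivative of the [n]-fold product
   is the sum defining [S_l] truncated at [j0 <= n], with the infinite products
   truncated at [n]; both truncations cost [O(2^-n)], uniformly for [|w| <= K]. *)

Lemma two_pow_pos n : 0 < 2 ^ n.
Proof. apply pow_lt; lra. Qed.

Lemma div_pow2_eventually_le C eps : 0 < eps ->
  exists N, forall n, (N <= n)%nat -> C / 2 ^ n <= eps.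
Proof.
  intros Heps.
  assert (Hlim : is_lim_seq (fun n => C * (/ 2) ^ n) 0).
  { replace (Finite 0) with (Rbar_mult C 0) by (simpl; f_equal; ring).
    apply is_lim_seq_scal_l, is_lim_seq_geom.
    rewrite Rabs_pos_eq; lra. }
  apply is_lim_seq_spec in Hlim.
  destruct (Hlim (mkposreal eps Heps)) as [N HN].
  exists N; intros n Hn.
  specialize (HN n Hn); simpl in HN.
  rewrite Rminus_0_r in HN.
  unfold Rdiv; rewrite <- pow_inv.
  apply Rle_trans with (1 := Rle_abs _); lra.
Qed.

Lemma sum_n_m_geom_half c n :
  sum_n_m (fun j => c / 2 ^ j) 1 n = c * (1 - / 2 ^ n).
Proof.
  induction n as [|n IHn].
  - rewrite sum_n_m_zero by lia. simpl; unfold zero; simpl; field.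
  - rewrite sum_n_Sm, IHn by lia. unfold plus; simpl.
    field; apply Rgt_not_eq, two_pow_pos.
Qed.

Lemma sum_n_m_abs_le_geom (g : nat -> R) c n :
  (forall j, Rabs (g j) <= c / 2 ^ j) -> Rabs (sum_n_m g 1 n) <= c.
Proof.
  intros Hg.
  assert (Hc : 0 <= c) by (specialize (Hg 0%nat); simpl in Hg; pose proof (Rabs_pos (g 0%nat)); lra).
  apply Rle_trans with (1 := norm_sum_n_m g 1 n).
  apply Rle_trans with (sum_n_m (fun j => c / 2 ^ j) 1 n).
  - apply sum_n_m_le; exact Hg.
  - rewrite sum_n_m_geom_half.
    pose proof (Rinv_0_lt_compat _ (two_pow_pos n)); nra.
Qed.

Lemma Lim_seq_error_of_geometric_steps (u : nat -> R) C :
  (forall n, Rabs (u (S n) - u n) <= C / 2 ^ S n) ->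
  forall n, Rabs (real (Lim_seq u) - u n) <= C / 2 ^ n.
Proof.
  intros Hstep.
  assert (Hdrift : forall n k, Rabs (u (k + n)%nat - u n) <= C / 2 ^ n - C / 2 ^ (k + n)).
  { intros n k; induction k as [|k IHk].
    - rewrite Nat.add_0_l, Rminus_eq_0, Rabs_R0; lra.
    - replace (u (S k + n)%nat - u n) with ((u (S (k + n)) - u (k + n)%nat) + (u (k + n)%nat - u n))
        by (simpl; ring).
      apply Rle_trans with (1 := Rabs_triang _ _).
      specialize (Hstep (k + n)%nat).
      assert (C / 2 ^ S (k + n) = C / 2 ^ (k + n) - C / 2 ^ (S k + n))
        by (simpl; field; apply Rgt_not_eq, two_pow_pos).
      lra. }
  assert (HC : 0 <= C).
  { specialize (Hstep 0%nat); simpl in Hstep; pose proof (Rabs_pos (u 1%nat - u 0%nat)); lra. }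
  assert (Hdrift_le : forall n p, (n <= p)%nat -> Rabs (u p - u n) <= C / 2 ^ n).
  { intros n p Hnp.
    replace p with ((p - n) + n)%nat by lia.
    apply Rle_trans with (1 := Hdrift n (p - n)%nat).
    pose proof (Rdiv_le_0_compat C _ HC (two_pow_pos (p - n + n))); lra. }
  assert (Hcv : ex_finite_lim_seq u).
  { apply ex_lim_seq_cauchy_corr; intros eps.
    destruct (div_pow2_eventually_le C (eps / 4)) as [N HN].
    { destruct eps; simpl; lra. }
    exists N; intros n p Hn Hp.
    replace (u n - u p) with ((u n - u N) - (u p - u N)) by ring.
    apply Rle_lt_trans with (1 := Rabs_triang _ _); rewrite Rabs_Ropp.
    pose proof (Hdrift_le N n Hn); pose proof (Hdrift_le N p Hp); pose proof (HN N (le_n N)).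
    destruct eps; simpl in *; lra. }
  destruct Hcv as [l Hl]; intros n.
  rewrite (is_lim_seq_unique _ _ Hl); simpl.
  apply (is_lim_seq_le_loc (fun p => Rabs (u p - u n)) (fun _ => C / 2 ^ n)
    (Rabs (l - u n)) (C / 2 ^ n)).
  - exists n; apply Hdrift_le.
  - apply (is_lim_seq_abs _ (l - u n)), is_lim_seq_minus'; [exact Hl | apply is_lim_seq_const].
  - apply is_lim_seq_const.
Qed.

Lemma exp_le_compat x y : x <= y -> exp x <= exp y.
Proof. intros [Hlt | ->]; [left; apply exp_increasing, Hlt | right; reflexivity]. Qed.

Section NearlyOneProducts.

Variables (f P : nat -> R) (q : R).
Hypothesis P_0 : P 0%nat = 1.
Hypothesis P_S : forall N, P (S N) = P N * f (S N).
Hypothesis f_near_1 : forall N, Rabs (f N - 1) <= q / 2 ^ N.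

Lemma near_one_rate_nonneg : 0 <= q.
Proof. specialize (f_near_1 0%nat); simpl in f_near_1; pose proof (Rabs_pos (f 0%nat - 1)); lra. Qed.

Lemma near_one_product_le_exp N : Rabs (P N) <= exp q.
Proof.
  assert (Hpartial : forall N, Rabs (P N) <= exp (q - q / 2 ^ N)).
  { intros N'; induction N' as [|N' IH].
    - rewrite P_0, Rabs_R1; simpl; replace (q - q / 1) with 0 by field; rewrite exp_0; lra.
    - assert (Hf : Rabs (f (S N')) <= exp (q / 2 ^ S N')).
      { apply Rle_trans with (2 := exp_ineq1_le _).
        replace (f (S N')) with (1 + (f (S N') - 1)) by ring.
        apply Rle_trans with (1 := Rabs_triang _ _); rewrite Rabs_R1.
        specialize (f_near_1 (S N')); lra. }
      replace (q - q / 2 ^ S N') with ((q - q / 2 ^ N') + q / 2 ^ S N')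
        by (simpl; field; apply Rgt_not_eq, two_pow_pos).
      rewrite P_S, Rabs_mult, exp_plus.
      apply Rmult_le_compat; auto; apply Rabs_pos. }
  apply Rle_trans with (1 := Hpartial N), exp_le_compat.
  pose proof (Rdiv_le_0_compat q _ near_one_rate_nonneg (two_pow_pos N)); lra.
Qed.

Lemma near_one_product_step N : Rabs (P (S N) - P N) <= q * exp q / 2 ^ S N.
Proof.
  replace (P (S N) - P N) with (P N * (f (S N) - 1)) by (rewrite P_S; ring).
  rewrite Rabs_mult.
  replace (q * exp q / 2 ^ S N) with (exp q * (q / 2 ^ S N)) by (unfold Rdiv; ring).
  apply Rmult_le_compat; try apply Rabs_pos; auto using near_one_product_le_exp.
Qed.

Lemma near_one_product_Lim_error N : Rabs (real (Lim_seq P) - P N) <= q * exp q / 2 ^ N.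
Proof. apply Lim_seq_error_of_geometric_steps, near_one_product_step. Qed.

End NearlyOneProducts.

Lemma sum_n_m_minus (f g : nat -> R) a b :
  sum_n_m (fun k => f k - g k) a b = sum_n_m f a b - sum_n_m g a b.
Proof.
  rewrite (sum_n_m_ext _ (fun k => plus (f k) (scal (-1) (g k))))
    by (intros; unfold plus, scal; simpl; unfold mult; simpl; ring).
  rewrite sum_n_m_plus, (sum_n_m_scal_l (K := R_Ring) (V := R_ModuleSpace)).
  unfold plus, scal; simpl; unfold mult; simpl.
  (* The sums carry convertible but syntactically different structures, which [ring] would treat as distinct atoms. *)
  change (ModuleSpace.AbelianMonoid R_Ring R_ModuleSpace) with R_AbelianMonoid; ring.
Qed.

Lemma prodm_except_lt m j0 N w : (N < j0)%nat -> prodm_except m j0 N w = prodm m N w.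
Proof.
  induction N as [|N IH]; intros HN; [reflexivity|].
  change (prodm_except m j0 N w * (if Nat.eqb (S N) j0 then 1 else m (w / 2 ^ S N))
          = prodm m N w * m (w / 2 ^ S N)).
  rewrite IH by lia.
  destruct (Nat.eqb_spec (S N) j0); [lia | reflexivity].
Qed.

Lemma prodm_except_succ_ne m j0 N w : (j0 <> S N)%nat ->
  prodm_except m j0 (S N) w = prodm_except m j0 N w * m (w / 2 ^ S N).
Proof.
  intros Hne; change (prodm_except m j0 N w * (if Nat.eqb (S N) j0 then 1 else m (w / 2 ^ S N))
                      = prodm_except m j0 N w * m (w / 2 ^ S N)).
  destruct (Nat.eqb_spec (S N) j0); [lia | reflexivity].
Qed.

Lemma prodm_except_diag m N w : prodm_except m (S N) (S N) w = prodm m N w.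
Proof.
  change (prodm_except m (S N) N w * (if Nat.eqb (S N) (S N) then 1 else m (w / 2 ^ S N))
          = prodm m N w).
  rewrite Nat.eqb_refl, prodm_except_lt by lia; ring.
Qed.

Section DyadicProduct.

Variables (m : R -> R) (D : R).
Hypothesis m_derivable : forall x, ex_derive m x.
Hypothesis Derive_m_le : forall x, Rabs (Derive m x) <= D.
Hypothesis m_0 : m 0 = 1.

Lemma Derive_bound_nonneg : 0 <= D.
Proof. apply Rle_trans with (2 := Derive_m_le 0), Rabs_pos. Qed.

Lemma abs_sub_1_le_Derive_bound x : Rabs (m x - 1) <= D * Rabs x.
Proof.
  rewrite <- m_0; replace (Rabs x) with (Rabs (x - 0)) by (rewrite Rminus_0_r; reflexivity).
  apply (bounded_variation m (Derive m)); intros t _.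
  split; [apply Derive_correct, m_derivable | apply Derive_m_le].
Qed.

Definition prodm_derivative (n : nat) (w : R) : R :=
  sum_n_m (fun j => / 2 ^ j * Derive m (w / 2 ^ j) * prodm_except m j n w) 1 n.

Lemma is_derive_prodm n w : is_derive (prodm m n) w (prodm_derivative n w).
Proof.
  induction n as [|n IH].
  - unfold prodm_derivative; rewrite sum_n_m_zero by lia; apply (is_derive_const 1).
  - assert (Hfactor : is_derive (fun x => m (x / 2 ^ S n)) w (/ 2 ^ S n * Derive m (w / 2 ^ S n))).
    { apply (is_derive_comp m (fun x => x / 2 ^ S n)).
      - apply Derive_correct, m_derivable.
      - auto_derive; [exact I | apply Rmult_1_l]. }
    replace (prodm_derivative (S n) w)
      with (prodm_derivative n w * m (w / 2 ^ S n) + prodm m n w * (/ 2 ^ S n * Derive m (w / 2 ^ S n))).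
    { exact (is_derive_mult _ _ _ _ _ IH Hfactor Rmult_comm). }
    unfold prodm_derivative; rewrite sum_n_Sm, prodm_except_diag by lia; symmetry.
    rewrite (sum_n_m_ext_loc _
      (fun j => mult (/ 2 ^ j * Derive m (w / 2 ^ j) * prodm_except m j n w) (m (w / 2 ^ S n))))
      by (intros j Hj; rewrite prodm_except_succ_ne by lia; unfold mult; simpl; ring).
    rewrite sum_n_m_mult_r; unfold plus, mult; simpl.
    (* As in [sum_n_m_minus]. *)
    change (Ring.AbelianMonoid R_Ring) with R_AbelianMonoid; ring.
Qed.

Variables (K w : R).
Hypothesis w_le_K : Rabs w <= K.

Let q := D * K.

Lemma infprod_except_error j0 N :
  Rabs (infprod_except m j0 w - prodm_except m j0 N w) <= q * exp q / 2 ^ N.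
Proof.
  apply (near_one_product_Lim_error (fun N => if Nat.eqb N j0 then 1 else m (w / 2 ^ N))
    (fun N => prodm_except m j0 N w)); [reflexivity | reflexivity |].
  intros N'; destruct (Nat.eqb N' j0).
  - rewrite Rminus_eq_0, Rabs_R0.
    apply Rdiv_le_0_compat; [|apply two_pow_pos].
    pose proof Derive_bound_nonneg; pose proof (Rabs_pos w); unfold q; nra.
  - apply Rle_trans with (1 := abs_sub_1_le_Derive_bound _).
    pose proof (two_pow_pos N').
    unfold Rdiv; rewrite Rabs_mult, Rabs_inv, (Rabs_pos_eq (2 ^ N')) by lra.
    pose proof Derive_bound_nonneg; pose proof (Rinv_0_lt_compat _ (two_pow_pos N')).
    unfold q; rewrite Rmult_assoc; apply Rmult_le_compat_l; [lra | apply Rmult_le_compat_r; lra].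
Qed.

Lemma infprod_except_abs_le j0 : Rabs (infprod_except m j0 w) <= 1 + q * exp q.
Proof.
  pose proof (infprod_except_error j0 0) as H; simpl in H.
  replace (infprod_except m j0 w) with ((infprod_except m j0 w - 1) + 1) by ring.
  apply Rle_trans with (1 := Rabs_triang _ _); rewrite Rabs_R1; lra.
Qed.

Let term j := / 2 ^ j * Derive m (w / 2 ^ j) * infprod_except m j w.

Lemma term_abs_le j : Rabs (term j) <= D * (1 + q * exp q) / 2 ^ j.
Proof.
  unfold term; pose proof (two_pow_pos j).
  rewrite !Rabs_mult, Rabs_inv, (Rabs_pos_eq (2 ^ j)) by lra.
  replace (D * (1 + q * exp q) / 2 ^ j) with (/ 2 ^ j * D * (1 + q * exp q)) by (field; lra).
  pose proof (Rinv_0_lt_compat _ (two_pow_pos j)).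
  apply Rmult_le_compat; try apply Rmult_le_pos; try apply Rabs_pos; try lra;
    auto using infprod_except_abs_le.
  apply Rmult_le_compat_l; [lra | apply Derive_m_le].
Qed.

Lemma S_of_partial_sum_error n :
  Rabs (S_of m w - sum_n_m term 1 n) <= D * (1 + q * exp q) / 2 ^ n.
Proof.
  replace (S_of m w) with (real (Lim_seq (fun n => sum_n_m term 1 n))).
  - apply Lim_seq_error_of_geometric_steps; intros n'.
    rewrite sum_n_Sm by lia; unfold plus; simpl.
    replace (sum_n_m term 1 n' + term (S n') - sum_n_m term 1 n') with (term (S n')) by ring.
    apply term_abs_le.
  - unfold S_of, Series; rewrite <- Lim_seq_incr_1.
    f_equal; apply Lim_seq_ext; intros n'.
    unfold sum_n; rewrite <- sum_n_m_S; reflexivity.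
Qed.

Lemma partial_sum_sub_prodm_derivative_le n :
  Rabs (sum_n_m term 1 n - prodm_derivative n w) <= D * (q * exp q) / 2 ^ n.
Proof.
  unfold prodm_derivative; rewrite <- sum_n_m_minus.
  apply sum_n_m_abs_le_geom; intros j; unfold term.
  replace (/ 2 ^ j * Derive m (w / 2 ^ j) * infprod_except m j w
           - / 2 ^ j * Derive m (w / 2 ^ j) * prodm_except m j n w)
    with (/ 2 ^ j * (Derive m (w / 2 ^ j) * (infprod_except m j w - prodm_except m j n w)))
    by ring.
  pose proof (two_pow_pos j); pose proof (two_pow_pos n).
  rewrite Rabs_mult, Rabs_inv, (Rabs_pos_eq (2 ^ j)) by lra.
  replace (D * (q * exp q) / 2 ^ n / 2 ^ j) with (/ 2 ^ j * (D * (q * exp q / 2 ^ n)))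
    by (field; lra).
  apply Rmult_le_compat_l; [left; apply Rinv_0_lt_compat; lra|].
  rewrite Rabs_mult.
  apply Rmult_le_compat; try apply Rabs_pos; auto using infprod_except_error.
Qed.

Lemma S_of_sub_Derive_prodm_le n :
  Rabs (S_of m w - Derive (prodm m n) w) <= D * (1 + 2 * (q * exp q)) / 2 ^ n.
Proof.
  rewrite (is_derive_unique _ _ _ (is_derive_prodm n w)).
  replace (S_of m w - prodm_derivative n w)
    with ((S_of m w - sum_n_m term 1 n) + (sum_n_m term 1 n - prodm_derivative n w)) by ring.
  apply Rle_trans with (1 := Rabs_triang _ _).
  pose proof (S_of_partial_sum_error n); pose proof (partial_sum_sub_prodm_derivative_le n).
  replace (D * (1 + 2 * (q * exp q)) / 2 ^ n)
    with (D * (1 + q * exp q) / 2 ^ n + D * (q * exp q) / 2 ^ n)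
    by (field; apply Rgt_not_eq, two_pow_pos).
  lra.
Qed.

End DyadicProduct.

Lemma S_of_sub_Derive_prodm_uniform (m : R -> R) (D : R) :
  (forall x, ex_derive m x) -> (forall x, Rabs (Derive m x) <= D) -> m 0 = 1 ->
  forall a b eps, 0 < eps -> exists N : nat, forall n : nat, (N <= n)%nat ->
    forall w, a <= w <= b -> Rabs (S_of m w - Derive (prodm m n) w) <= eps.
Proof.
  intros m_derivable Derive_m_le m_0 a b eps Heps.
  set (q := D * (Rabs a + Rabs b)).
  destruct (div_pow2_eventually_le (D * (1 + 2 * (q * exp q))) eps Heps) as [N HN].
  exists N; intros n Hn w Hw.
  apply Rle_trans with (2 := HN n Hn).
  apply (S_of_sub_Derive_prodm_le m D m_derivable Derive_m_le m_0).
  unfold Rabs; repeat destruct Rcase_abs; lra.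
Qed.

Definition bounded_derivable (f : R -> R) : Prop :=
  (forall x, ex_derive f x) /\ exists B, forall x, Rabs (f x) <= B /\ Rabs (Derive f x) <= B.

Lemma bounded_derivable_ext f g :
  (forall x, f x = g x) -> bounded_derivable f -> bounded_derivable g.
Proof.
  intros Hfg [Hf [B HB]]; split.
  - intros x; apply (ex_derive_ext f); auto.
  - exists B; intros x; rewrite <- Hfg, <- (Derive_ext f g x Hfg); apply HB.
Qed.

Lemma bounded_derivable_const c : bounded_derivable (fun _ => c).
Proof.
  split; [intros; apply ex_derive_const|].
  exists (Rabs c); intros x; rewrite Derive_const, Rabs_R0; split; [lra | apply Rabs_pos].
Qed.

Lemma bounded_derivable_plus f g :
  bounded_derivable f -> bounded_derivable g -> bounded_derivable (fun x => f x + g x).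
Proof.
  intros [Hf [Bf HBf]] [Hg [Bg HBg]]; split.
  - intros x; apply (ex_derive_plus f g); auto.
  - exists (Bf + Bg); intros x; rewrite Derive_plus by auto.
    destruct (HBf x), (HBg x).
    split; apply Rle_trans with (1 := Rabs_triang _ _); lra.
Qed.

Lemma bounded_derivable_mult f g :
  bounded_derivable f -> bounded_derivable g -> bounded_derivable (fun x => f x * g x).
Proof.
  intros [Hf [Bf HBf]] [Hg [Bg HBg]]; split.
  - intros x; apply ex_derive_mult; auto.
  - exists (Bf * Bg + Bf * Bg); intros x; rewrite Derive_mult by auto.
    destruct (HBf x) as [Hf0 Hf1], (HBg x) as [Hg0 Hg1].
    pose proof (Rabs_pos (f x)); pose proof (Rabs_pos (g x)).
    pose proof (Rabs_pos (Derive f x)); pose proof (Rabs_pos (Derive g x)).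
    assert (Rabs (f x) * Rabs (g x) <= Bf * Bg) by (apply Rmult_le_compat; auto).
    assert (Rabs (Derive f x) * Rabs (g x) <= Bf * Bg) by (apply Rmult_le_compat; auto).
    assert (Rabs (f x) * Rabs (Derive g x) <= Bf * Bg) by (apply Rmult_le_compat; auto).
    rewrite Rabs_mult; split; [nra|].
    apply Rle_trans with (1 := Rabs_triang _ _); rewrite !Rabs_mult; lra.
Qed.

Lemma bounded_derivable_pow f n : bounded_derivable f -> bounded_derivable (fun x => f x ^ n).
Proof.
  intros Hf; induction n as [|n IH]; [exact (bounded_derivable_const 1)|].
  exact (bounded_derivable_mult _ _ Hf IH).
Qed.

Lemma bounded_derivable_cos_scal a : bounded_derivable (fun x => cos (a * x)).
Proof.
  assert (Hd : forall x, is_derive (fun x : R => cos (a * x)) x (- (a * sin (a * x))))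
    by (intros x; auto_derive; [exact I | ring]).
  split; [intros x; exists (- (a * sin (a * x))); apply Hd|].
  exists (1 + Rabs a); intros x; rewrite (is_derive_unique _ _ _ (Hd x)).
  rewrite Rabs_Ropp, Rabs_mult.
  pose proof (Rabs_pos a); pose proof (Rabs_pos (sin (a * x))).
  assert (Rabs (cos (a * x)) <= 1) by (apply Rabs_le, COS_bound).
  assert (Rabs (sin (a * x)) <= 1) by (apply Rabs_le, SIN_bound).
  split; nra.
Qed.

Lemma bounded_derivable_sin_scal a : bounded_derivable (fun x => sin (a * x)).
Proof.
  assert (Hd : forall x, is_derive (fun x : R => sin (a * x)) x (a * cos (a * x)))
    by (intros x; auto_derive; [exact I | ring]).
  split; [intros x; exists (a * cos (a * x)); apply Hd|].
  exists (1 + Rabs a); intros x; rewrite (is_derive_unique _ _ _ (Hd x)).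
  rewrite Rabs_mult.
  pose proof (Rabs_pos a); pose proof (Rabs_pos (cos (a * x))).
  assert (Rabs (cos (a * x)) <= 1) by (apply Rabs_le, COS_bound).
  assert (Rabs (sin (a * x)) <= 1) by (apply Rabs_le, SIN_bound).
  split; nra.
Qed.

Lemma bounded_derivable_sum_n_m (F : nat -> R -> R) a b :
  (forall k, bounded_derivable (F k)) -> bounded_derivable (fun x => sum_n_m (fun k => F k x) a b).
Proof.
  intros HF; induction b as [|b IH].
  - destruct a as [|a].
    + apply (bounded_derivable_ext (F 0%nat)); [intros x; rewrite sum_n_n; reflexivity | apply HF].
    + apply (bounded_derivable_ext (fun _ => 0)); [intros x; rewrite sum_n_m_zero by lia; reflexivity|].
      apply bounded_derivable_const.
  - destruct (Compare_dec.le_lt_dec a (S b)) as [Hab | Hab].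
    + apply (bounded_derivable_ext (fun x => sum_n_m (fun k => F k x) a b + F (S b) x));
        [intros x; rewrite sum_n_Sm by lia; reflexivity|].
      apply bounded_derivable_plus; auto.
    + apply (bounded_derivable_ext (fun _ => 0)); [intros x; rewrite sum_n_m_zero by lia; reflexivity|].
      apply bounded_derivable_const.
Qed.

Lemma bounded_derivable_u_meth lam n f : bounded_derivable (u_meth lam n f).
Proof.
  apply bounded_derivable_plus; [apply bounded_derivable_const|].
  apply bounded_derivable_sum_n_m; intros k.
  apply bounded_derivable_mult; [apply bounded_derivable_const|].
  apply bounded_derivable_plus; apply bounded_derivable_mult;
    auto using bounded_derivable_const, bounded_derivable_cos_scal, bounded_derivable_sin_scal.
Qed.

Theorem lemma11
  (theta : R -> R) (w0 : R) (lam : nat -> nat -> R) (nl : nat -> nat) (l0 : nat)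
  (Htheta : theta_ok theta)
  (Hw0 : PI / 3 <= w0 < PI / 2)
  (Hu : forall eps, 0 < eps -> exists L : nat, forall l : nat, (L <= l)%nat ->
          forall w, - PI <= w <= PI ->
            INR l * Rabs (u_meth lam (nl l) (mMl theta w0 l) w - mMl theta w0 l w) <= eps)
  (Hu1 : forall eps, 0 < eps -> exists L : nat, forall l : nat, (L <= l)%nat ->
          forall w, - PI <= w <= PI ->
            Rabs (u_meth lam (nl l) (Derive (mMl theta w0 l)) w
                  - Derive (mMl theta w0 l) w) <= eps)
  (Hpi : forall l : nat, u_meth lam (nl l) (mMl theta w0 l) PI <> 0)
  (Hl0 : exists c, 0 < c /\ forall l : nat, (l0 <= l)%nat ->
          c <= Rabs (u_meth lam (nl l) (mMl theta w0 l) 0)) :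
  let ml := fun (l : nat) (w : R) =>
    (cos (w / 2)) ^ (2 * l) * u_meth lam (nl l) (mMl theta w0 l) w
      / u_meth lam (nl l) (mMl theta w0 l) 0 in
  forall l : nat, (l0 <= l)%nat -> forall a b : R, a < b ->
    forall eps, 0 < eps -> exists N : nat, forall n : nat, (N <= n)%nat ->
      forall w, a <= w <= b ->
        Rabs (S_of (ml l) w - Derive (prodm (ml l) n) w) <= eps.
Proof.
  intros ml l Hl a b _.
  destruct Hl0 as [c [Hc Hc_le]]; specialize (Hc_le l Hl).
  set (T := u_meth lam (nl l) (mMl theta w0 l)) in *.
  assert (HT0 : T 0 <> 0) by (intros E; rewrite E, Rabs_R0 in Hc_le; lra).
  assert (Hml : bounded_derivable (ml l)).
  { apply (bounded_derivable_ext (fun x => cos (/ 2 * x) ^ (2 * l) * T x * / T 0)).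
    { intros x; unfold ml; fold T; rewrite Rmult_comm with (r1 := / 2); reflexivity. }
    apply bounded_derivable_mult; [apply bounded_derivable_mult|].
    - exact (bounded_derivable_pow _ (2 * l) (bounded_derivable_cos_scal (/ 2))).
    - apply bounded_derivable_u_meth.
    - apply bounded_derivable_const. }
  destruct Hml as [Hml_derivable [B HB]].
  apply (S_of_sub_Derive_prodm_uniform (ml l) B Hml_derivable); [intros x; apply HB|].
  unfold ml; fold T.
  replace (0 / 2) with 0 by field; rewrite cos_0, pow1; field; exact HT0.
Qed.
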